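(* For all $P,Q\in\Gamma_n$, $$0\le M_{SA}(P\|Q)\le \tfrac14 \Delta(P\|Q)\qquad\text{and}\qquad 0\le \xi_{SA}(P\|Q)\le \tfrac14\xi_{\Delta}(P\|Q).$$
   Context: $\Gamma_n=\{P=(p_1,\dots,p_n): p_i>0,\ \sum_i p_i=1\}$, $n\ge2$. For $f:(0,\infty)\to\mathbb{R}$, $C_f(P\|Q)=\sum_{i=1}^n q_i f(p_i/q_i)$; for differentiable $f$, $E_f(P\|Q)=\sum_{i=1}^n (p_i-q_i) f'(p_i/q_i)$ and $\xi_f=E_f-C_f$. With $f_{SA}(x)=\sqrt{(x^2+1)/2}-\frac{x+1}{2}$ and $f_\Delta(x)=\frac{(x-1)^2}{x+1}$: $M_{SA}=C_{f_{SA}}=\sum_i\sqrt{(p_i^2+q_i^2)/2}-1$, $\Delta=C_{f_\Delta}=\sum_i\frac{(p_i-q_i)^2}{p_i+q_i}$, $\xi_{SA}=\xi_{f_{SA}}$, $\xi_\Delta=\xi_{f_\Delta}$. *)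

From Stdlib Require Import Reals.
From Coquelicot Require Import Coquelicot.
Open Scope R_scope.

Fixpoint rsum (n : nat) (g : nat -> R) : R :=
  match n with
  | O => 0
  | S m => rsum m g + g m
  end.

Definition Gamma (n : nat) (p : nat -> R) : Prop :=
  (forall i, (i < n)%nat -> 0 < p i) /\ rsum n p = 1.

Definition Cf (f : R -> R) (n : nat) (p q : nat -> R) : R :=
  rsum n (fun i => q i * f (p i / q i)).

Definition Ef (f : R -> R) (n : nat) (p q : nat -> R) : R :=
  rsum n (fun i => (p i - q i) * Derive f (p i / q i)).

Definition xi (f : R -> R) (n : nat) (p q : nat -> R) : R :=
  Ef f n p q - Cf f n p q.

Definition f_SA (x : R) : R := sqrt ((x ^ 2 + 1) / 2) - (x + 1) / 2.
Definition f_Delta (x : R) : R := (x - 1) ^ 2 / (x + 1).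

Definition M_SA := Cf f_SA.
Definition Delta_div := Cf f_Delta.
Definition xi_SA := xi f_SA.
Definition xi_Delta := xi f_Delta.

(* With m = (x+1)/2 and s = sqrt ((x^2+1)/2) >= m, the identity s^2 - m^2 = (x-1)^2/4
   writes f_SA(x) = (x-1)^2 / (4 (s+m)) and (x-1) f_SA'(x) - f_SA(x) = (x-1)^2 / (4 s (s+m)),
   whose denominators dominate those of f_Delta(x)/4 = (x-1)^2/(4 (2m)) and of
   ((x-1) f_Delta'(x) - f_Delta(x))/4 = (x-1)^2/(4 (2m^2)).  Since
   xi_f = C_g for g(x) = (x-1) f'(x) - f(x), both inequalities follow termwise. *)
From Stdlib Require Import Reals Lra Psatz.
From Coquelicot Require Import Coquelicot.
Open Scope R_scope.

Lemma rsum_ext n f g :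
  (forall i, (i < n)%nat -> f i = g i) -> rsum n f = rsum n g.
Proof.
  induction n as [|n IH]; intros Hfg; simpl; [reflexivity|].
  rewrite IH, Hfg; [reflexivity | lia | intros; apply Hfg; lia].
Qed.

Lemma rsum_le n f g :
  (forall i, (i < n)%nat -> f i <= g i) -> rsum n f <= rsum n g.
Proof.
  induction n as [|n IH]; intros Hfg; simpl; [lra|].
  apply Rplus_le_compat; [apply IH; intros; apply Hfg; lia | apply Hfg; lia].
Qed.

Lemma rsum_nonneg n f :
  (forall i, (i < n)%nat -> 0 <= f i) -> 0 <= rsum n f.
Proof.
  induction n as [|n IH]; intros Hf; simpl; [lra|].
  apply Rplus_le_le_0_compat; [apply IH; intros; apply Hf; lia | apply Hf; lia].
Qed.

Lemma rsum_scal n c f : c * rsum n f = rsum n (fun i => c * f i).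
Proof. induction n as [|n IH]; simpl; [ring | rewrite <- IH; ring]. Qed.

Lemma rsum_minus n f g : rsum n f - rsum n g = rsum n (fun i => f i - g i).
Proof. induction n as [|n IH]; simpl; [ring | rewrite <- IH; ring]. Qed.

Definition xi_kernel (f : R -> R) (x : R) : R := (x - 1) * Derive f x - f x.

Lemma xi_Cf f n p q :
  (forall i, (i < n)%nat -> 0 < q i) -> xi f n p q = Cf (xi_kernel f) n p q.
Proof.
  intros Hq. unfold xi, Ef, Cf, xi_kernel. rewrite rsum_minus.
  apply rsum_ext. intros i Hi. specialize (Hq i Hi). field. lra.
Qed.

Lemma Cf_compare f g c n p q :
  (forall x, 0 < x -> 0 <= f x /\ f x <= c * g x) ->
  (forall i, (i < n)%nat -> 0 < p i) -> (forall i, (i < n)%nat -> 0 < q i) ->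
  0 <= Cf f n p q /\ Cf f n p q <= c * Cf g n p q.
Proof.
  intros Hfg Hp Hq. unfold Cf. rewrite rsum_scal. split.
  - apply rsum_nonneg. intros i Hi.
    destruct (Hfg (p i / q i)) as [Hf _]; [apply Rdiv_lt_0_compat; auto|].
    specialize (Hq i Hi). nra.
  - apply rsum_le. intros i Hi.
    destruct (Hfg (p i / q i)) as [_ Hf]; [apply Rdiv_lt_0_compat; auto|].
    specialize (Hq i Hi). nra.
Qed.

Lemma div_le_div_l a b c : 0 <= a -> 0 < b -> b <= c -> a / c <= a / b.
Proof.
  intros Ha Hb Hbc. apply Rmult_le_compat_l; [exact Ha|].
  apply Rinv_le_contravar; assumption.
Qed.

Definition qmean (x : R) : R := sqrt ((x ^ 2 + 1) / 2).

Lemma qmean_sq x : qmean x * qmean x = (x ^ 2 + 1) / 2.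
Proof. apply sqrt_sqrt. nra. Qed.

Lemma qmean_gt0 x : 0 < qmean x.
Proof. apply sqrt_lt_R0. nra. Qed.

Lemma amean_le_qmean x : (x + 1) / 2 <= qmean x.
Proof.
  destruct (Rle_lt_dec ((x + 1) / 2) 0) as [Hm | Hm].
  - pose proof (qmean_gt0 x). lra.
  - rewrite <- (sqrt_square ((x + 1) / 2)) by lra.
    apply sqrt_le_1_alt. pose proof (pow2_ge_0 (x - 1)). nra.
Qed.

Lemma f_SA_eq x :
  0 < x -> f_SA x = (x - 1) ^ 2 / (4 * (qmean x + (x + 1) / 2)).
Proof.
  intros Hx. pose proof (qmean_sq x). pose proof (qmean_gt0 x).
  change (f_SA x) with (qmean x - (x + 1) / 2).
  apply (Rmult_eq_reg_r (4 * (qmean x + (x + 1) / 2))); [|nra].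
  field_simplify; [nra | nra].
Qed.

Lemma Derive_f_SA x : Derive f_SA x = x / (2 * qmean x) - / 2.
Proof.
  pose proof (qmean_gt0 x). apply is_derive_unique. unfold f_SA. auto_derive.
  - nra.
  - fold (qmean x). replace ((x * (x * 1) + 1) * / 2) with ((x ^ 2 + 1) / 2) by field.
    fold (qmean x). field. lra.
Qed.

Lemma Derive_f_Delta x : 0 < x -> Derive f_Delta x = (x - 1) * (x + 3) / (x + 1) ^ 2.
Proof.
  intros Hx. apply is_derive_unique. unfold f_Delta. auto_derive; [lra | field; lra].
Qed.

Lemma xi_kernel_SA_eq x : 0 < x ->
  xi_kernel f_SA x = (x - 1) ^ 2 / (4 * (qmean x * (qmean x + (x + 1) / 2))).
Proof.
  intros Hx. pose proof (qmean_sq x). pose proof (qmean_gt0 x).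
  unfold xi_kernel. rewrite Derive_f_SA.
  change (f_SA x) with (qmean x - (x + 1) / 2).
  apply (Rmult_eq_reg_r (4 * (qmean x * (qmean x + (x + 1) / 2)))); [|nra].
  field_simplify; [nra | nra | lra].
Qed.

Lemma xi_kernel_Delta_eq x : 0 < x ->
  xi_kernel f_Delta x = 2 * (x - 1) ^ 2 / (x + 1) ^ 2.
Proof.
  intros Hx. unfold xi_kernel, f_Delta. rewrite Derive_f_Delta by lra. field. lra.
Qed.

Lemma f_SA_bounds x : 0 < x -> 0 <= f_SA x /\ f_SA x <= / 4 * f_Delta x.
Proof.
  intros Hx. pose proof (amean_le_qmean x). pose proof (pow2_ge_0 (x - 1)).
  rewrite f_SA_eq by lra. unfold f_Delta.
  replace (/ 4 * ((x - 1) ^ 2 / (x + 1))) with ((x - 1) ^ 2 / (4 * (x + 1))) by (field; lra).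
  split.
  - apply Rdiv_le_0_compat; nra.
  - apply div_le_div_l; nra.
Qed.

Lemma xi_kernel_SA_bounds x : 0 < x ->
  0 <= xi_kernel f_SA x /\ xi_kernel f_SA x <= / 4 * xi_kernel f_Delta x.
Proof.
  intros Hx. pose proof (amean_le_qmean x). pose proof (pow2_ge_0 (x - 1)).
  rewrite xi_kernel_SA_eq, xi_kernel_Delta_eq by lra.
  replace (/ 4 * (2 * (x - 1) ^ 2 / (x + 1) ^ 2))
    with ((x - 1) ^ 2 / (4 * ((x + 1) / 2 * ((x + 1) / 2 + (x + 1) / 2)))) by (field; lra).
  split.
  - apply Rdiv_le_0_compat; nra.
  - apply div_le_div_l; [nra | nra |].
    apply Rmult_le_compat_l; [lra|]. apply Rmult_le_compat; lra.
Qed.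

Theorem proposition5p2 (n : nat) (p q : nat -> R) :
  (2 <= n)%nat -> Gamma n p -> Gamma n q ->
  (0 <= M_SA n p q /\ M_SA n p q <= / 4 * Delta_div n p q) /\
  (0 <= xi_SA n p q /\ xi_SA n p q <= / 4 * xi_Delta n p q).
Proof.
  intros _ [Hp _] [Hq _]. unfold xi_SA, xi_Delta. rewrite !xi_Cf by exact Hq.
  split; apply Cf_compare; auto.
  - exact f_SA_bounds.
  - exact xi_kernel_SA_bounds.
Qed.
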